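(* Consider the heterogeneous agents $$\dot x_i=\sum_{j=1}^N\alpha_{ij}(t)(y_j-y_i),\qquad y_i=\mathrm{sat}_i(x_i),\qquad i\in\mathcal V=\{1,\dots,N\},$$ with saturation levels ordered $s_1>s_2>\dots>s_N>0$, where the time-varying undirected graph satisfies the standing assumptions, is integrally connected over $[0,\infty)$, and satisfies $\alpha_{ij}(t)\in\{0\}\cup[\alpha_{\min},\alpha_{\max}]$ for all $i,j,t$ with constants $0<\alpha_{\min}\le\alpha_{\max}$. Then for every initial condition $x(t_0)\in\mathbb R^N$ there exists $T\ge t_0$ such that $x_i(t)\in(-s_i,s_i)$ for all $i\in\{1,\dots,N-1\}$ and all $t\ge T$. Moreover, $\limsup_{t\to\infty}|x_i(t)|\le s_N$ for all $i\in\{1,\dots,N-1\}$.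
   Context: $\mathrm{sat}_i(x)=\mathrm{sign}(x)\min\{|x|,s_i\}$. Standing assumptions: $\alpha_{ij}(t)=\alpha_{ji}(t)\ge0$, each $\alpha_{ij}$ continuous on $[0,\infty)$ except on a set of measure zero; Carathéodory solutions. Integral graph: adjacency $\bar\alpha_{ij}=1$ if $\int_0^\infty\alpha_{ij}(t)dt=\infty$, else $0$; integrally connected means the integral graph is connected. *)

From Stdlib Require Import Reals Lra List.
Open Scope R_scope.

Definition sign (x : R) : R :=
  if Rlt_dec 0 x then 1 else if Rlt_dec x 0 then -1 else 0.

Definition sat (s x : R) : R := sign x * Rmin (Rabs x) s.

Definition null_set (E : R -> Prop) : Prop :=
  forall eps : R, 0 < eps ->
    exists a b : nat -> R,
      (forall n, a n <= b n) /\
      (forall t, E t -> exists n, a n < t < b n) /\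
      (forall n, sum_f_R0 (fun k => b k - a k) n <= eps).

Definition integral_ge (f : R -> R) (a b M : R) : Prop :=
  exists pr : Riemann_integrable f a b, M <= RiemannInt pr.

Definition integral_infinite (f : R -> R) : Prop :=
  forall M : R, exists T : R, 0 <= T /\ integral_ge f 0 T M.

(* integral graph on vertices 0..N-1 (agents 1..N shifted by one) *)
Definition integral_edge (alpha : nat -> nat -> R -> R) (i j : nat) : Prop :=
  integral_infinite (alpha i j).

Inductive reach (N : nat) (E : nat -> nat -> Prop) : nat -> nat -> Prop :=
| reach_refl : forall i, (i < N)%nat -> reach N E i i
| reach_step : forall i j k, reach N E i j -> (k < N)%nat -> E j k ->
    reach N E i k.

Definition integrally_connected (N : nat) (alpha : nat -> nat -> R -> R) : Prop :=
  forall i j, (i < N)%nat -> (j < N)%nat -> reach N (integral_edge alpha) i j.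

Definition rhs (N : nat) (alpha : nat -> nat -> R -> R) (s : nat -> R)
  (x : nat -> R -> R) (i : nat) (t : R) : R :=
  fold_right Rplus 0
    (map (fun j => alpha i j t * (sat (s j) (x j t) - sat (s i) (x i t)))
         (seq 0 N)).

(* Caratheodory solution on [t0, infinity): integral equation. *)
Definition is_solution (N : nat) (alpha : nat -> nat -> R -> R) (s : nat -> R)
  (x : nat -> R -> R) (t0 : R) : Prop :=
  forall i, (i < N)%nat -> forall t, t0 <= t ->
    exists pr : Riemann_integrable (rhs N alpha s x i) t0 t,
      x i t = x i t0 + RiemannInt pr.

(* Agents are numbered 0 .. N-1.  For a level lam in [s (N-1), s (N-2)), the excess
   sum_{i < N-1} (x_i - lam)^+ is nonincreasing: it changes by the net flow into the agents
   above lam, the flows among them cancel, and a flow into one of them from an agent at or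
   below lam is nonpositive, since an agent above lam is unsaturated and the last agent's
   output never exceeds s (N-1) <= lam.  As finitely many excesses converge, some thin band
   of levels between s (N-1) and a bound b < s (N-2) is eventually avoided by all of the
   first N-1 agents.  If one of them is above the band, the agents above it form a fixed set
   not containing the last agent; an integral edge leaves this set, and the flow through it,
   at least the band width times its weight, would drive the total state of the set to -oo.
   Hence all of them end up below the band, and the symmetry x -> -x gives the lower
   bound. *)

From Pilot Require Import Defs.
From Stdlib Require Import Reals Lra Lia List Classical.
From Coquelicot Require Import Coquelicot.
Open Scope R_scope.

Ltac destruct_minmax := repeat match goal with
  | |- context [Rmin ?a ?b] =>
      destruct (Rle_dec a b); [rewrite (Rmin_left a b) by lra | rewrite (Rmin_right a b) by lra]
  | |- context [Rmax ?a ?b] =>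
      destruct (Rle_dec a b); [rewrite (Rmax_right a b) by lra | rewrite (Rmax_left a b) by lra]
  end.

Definition lsum (f : nat -> R) (l : list nat) : R :=
  fold_right (fun j acc => f j + acc) 0 l.

Lemma lsum_ext (f g : nat -> R) l :
  (forall i, In i l -> f i = g i) -> lsum f l = lsum g l.
Proof.
  induction l as [|a l IH]; intros H; simpl; auto.
  rewrite H by (left; auto). rewrite IH; auto.
  intros; apply H; right; auto.
Qed.

Lemma lsum_le (f g : nat -> R) l :
  (forall i, In i l -> f i <= g i) -> lsum f l <= lsum g l.
Proof.
  induction l as [|a l IH]; intros H; simpl; [lra|].
  assert (f a <= g a) by (apply H; left; auto).
  assert (lsum f l <= lsum g l) by (apply IH; intros; apply H; right; auto).
  lra.
Qed.

Lemma lsum_zero l : lsum (fun _ => 0) l = 0.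
Proof. induction l; simpl; lra. Qed.

Lemma lsum_plus f g l : lsum (fun i => f i + g i) l = lsum f l + lsum g l.
Proof. induction l; simpl; lra. Qed.

Lemma lsum_opp f l : lsum (fun i => - f i) l = - lsum f l.
Proof. induction l; simpl; lra. Qed.

Lemma lsum_minus f g l : lsum (fun i => f i - g i) l = lsum f l - lsum g l.
Proof. induction l; simpl; lra. Qed.

Lemma Rabs_lsum_le (f : nat -> R) l : Rabs (lsum f l) <= lsum (fun i => Rabs (f i)) l.
Proof.
  induction l as [|a l IH]; simpl; [rewrite Rabs_R0; lra|].
  eapply Rle_trans; [apply Rabs_triang|lra].
Qed.

Lemma lsum_app f l1 l2 : lsum f (l1 ++ l2) = lsum f l1 + lsum f l2.
Proof. induction l1; simpl; lra. Qed.

Lemma lsum_nonneg (f : nat -> R) l : (forall i, In i l -> 0 <= f i) -> 0 <= lsum f l.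
Proof. intros H. rewrite <- (lsum_zero l). apply lsum_le; auto. Qed.

Lemma lsum_nonpos (f : nat -> R) l : (forall i, In i l -> f i <= 0) -> lsum f l <= 0.
Proof.
  intros H. rewrite <- (Ropp_involutive (lsum f l)), <- lsum_opp.
  enough (0 <= lsum (fun i => - f i) l) by lra.
  apply lsum_nonneg. intros i Hi. specialize (H i Hi). lra.
Qed.

Lemma lsum_le_const (f : nat -> R) c l :
  0 <= c -> (forall i, In i l -> f i <= c) -> lsum f l <= INR (length l) * c.
Proof.
  induction l as [|a l IH]; intros Hc H; [simpl; lra|].
  change (length (a :: l)) with (S (length l)). rewrite S_INR. simpl.
  assert (f a <= c) by (apply H; left; auto).
  assert (lsum f l <= INR (length l) * c) by (apply IH; auto; intros; apply H; right; auto).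
  lra.
Qed.

Lemma lsum_seq_le_const (f : nat -> R) c n :
  0 <= c -> (forall i, (i < n)%nat -> f i <= c) -> lsum f (seq 0 n) <= INR n * c.
Proof.
  intros Hc H. rewrite <- (length_seq n 0) at 2.
  apply lsum_le_const; auto. intros i Hi. apply in_seq in Hi. apply H. lia.
Qed.

Lemma lsum_ge_term (f : nat -> R) l p :
  (forall i, In i l -> 0 <= f i) -> In p l -> f p <= lsum f l.
Proof.
  induction l as [|a l IH]; intros H Hp; simpl in *; [contradiction|].
  assert (0 <= f a) by (apply H; auto).
  assert (0 <= lsum f l) by (apply lsum_nonneg; auto).
  destruct Hp as [->|Hp]; [lra|].
  assert (f p <= lsum f l) by (apply IH; auto). lra.
Qed.

Lemma lsum_le_term (f : nat -> R) l p :
  (forall i, In i l -> f i <= 0) -> In p l -> lsum f l <= f p.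
Proof.
  intros H Hp.
  assert (- f p <= lsum (fun i => - f i) l).
  { apply (lsum_ge_term (fun i => - f i)); auto. intros i Hi. specialize (H i Hi). lra. }
  rewrite lsum_opp in H0. lra.
Qed.

Lemma lsum_swap (F : nat -> nat -> R) l1 l2 :
  lsum (fun i => lsum (F i) l2) l1 = lsum (fun k => lsum (fun i => F i k) l1) l2.
Proof.
  induction l1 as [|a l1 IH]; simpl.
  - symmetry. apply lsum_zero.
  - rewrite IH, <- lsum_plus. reflexivity.
Qed.

Lemma lsum_antisym (F : nat -> nat -> R) l :
  (forall i k, In i l -> In k l -> F i k = - F k i) ->
  lsum (fun i => lsum (F i) l) l = 0.
Proof.
  intros H.
  enough (lsum (fun i => lsum (F i) l) l = - lsum (fun i => lsum (F i) l) l) by lra.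
  rewrite lsum_swap at 1. rewrite <- lsum_opp. apply lsum_ext; intros k Hk.
  rewrite <- lsum_opp. apply lsum_ext; intros i Hi. apply H; auto.
Qed.

Lemma lsum_seq_prefix (f : nat -> R) n m : (n <= m)%nat ->
  lsum f (seq 0 n) = lsum (fun i => if (i <? n)%nat then f i else 0) (seq 0 m).
Proof.
  intros Hnm. replace m with (n + (m - n))%nat by lia.
  rewrite seq_app, lsum_app, <- (Rplus_0_r (lsum f (seq 0 n))). f_equal.
  - apply lsum_ext. intros i Hi. apply in_seq in Hi.
    replace (i <? n)%nat with true by (symmetry; apply Nat.ltb_lt; lia). reflexivity.
  - transitivity (lsum (fun _ => 0) (seq (0 + n) (m - n))); [symmetry; apply lsum_zero|].
    apply lsum_ext. intros i Hi. apply in_seq in Hi.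
    replace (i <? n)%nat with false by (symmetry; apply Nat.ltb_ge; lia). reflexivity.
Qed.

Lemma lsum_RInt (F : nat -> R -> R) l a b :
  (forall i, In i l -> ex_RInt (F i) a b) ->
  ex_RInt (fun t => lsum (fun i => F i t) l) a b /\
  RInt (fun t => lsum (fun i => F i t) l) a b = lsum (fun i => RInt (F i) a b) l.
Proof.
  induction l as [|c l IH]; intros H.
  - simpl. split; [apply (ex_RInt_const a b 0)|].
    rewrite RInt_const. unfold scal; simpl; unfold mult; simpl. ring.
  - destruct IH as [IH1 IH2]; [intros; apply H; right; auto|].
    assert (Hc : ex_RInt (F c) a b) by (apply H; left; auto).
    simpl. split.
    + apply (ex_RInt_plus (F c) (fun t => lsum (fun i => F i t) l)); auto.
    + rewrite <- IH2. apply (RInt_plus (F c) (fun t => lsum (fun i => F i t) l)); auto.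
Qed.

Lemma sat_clamp s x : 0 < s -> sat s x = Rmax (-s) (Rmin x s).
Proof.
  intros Hs. unfold sat, Defs.sign.
  destruct (Rlt_dec 0 x); [|destruct (Rlt_dec x 0)].
  - rewrite Rabs_pos_eq by lra. destruct_minmax; lra.
  - rewrite Rabs_left by lra. destruct_minmax; lra.
  - replace x with 0 by lra. rewrite Rabs_R0. destruct_minmax; lra.
Qed.

Lemma sat_mono s x y : 0 < s -> x <= y -> sat s x <= sat s y.
Proof. intros. rewrite !sat_clamp by auto. destruct_minmax; lra. Qed.

Lemma sat_abs_le s x : 0 < s -> Rabs (sat s x) <= s.
Proof. intros. rewrite sat_clamp by auto. apply Rabs_le. destruct_minmax; lra. Qed.

Lemma sat_le_level s x : 0 < s -> sat s x <= s.
Proof. intros. rewrite sat_clamp by auto. destruct_minmax; lra. Qed.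

Lemma le_sat s x : 0 < s -> x <= s -> x <= sat s x.
Proof. intros. rewrite sat_clamp by auto. destruct_minmax; lra. Qed.

Lemma sat_le s x : 0 < s -> -s <= x -> sat s x <= x.
Proof. intros. rewrite sat_clamp by auto. destruct_minmax; lra. Qed.

Lemma sat_opp s x : 0 < s -> sat s (- x) = - sat s x.
Proof. intros. rewrite !sat_clamp by auto. destruct_minmax; lra. Qed.

Lemma antitone_of_quadratic_increment (f : R -> R) t0 C : 0 <= C ->
  (forall t h, t0 <= t -> 0 <= h -> f (t + h) - f t <= C * (h * h)) ->
  forall t1 t2, t0 <= t1 -> t1 <= t2 -> f t2 <= f t1.
Proof.
  intros HC Hinc t1 t2 H1 H2.
  assert (Hsub : forall n, (0 < n)%nat -> INR n * (f t2 - f t1) <= C * ((t2 - t1) * (t2 - t1))).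
  { intros n Hn. set (h := (t2 - t1) / INR n).
    assert (Hnr : 0 < INR n) by (apply lt_0_INR; auto).
    assert (Hh : 0 <= h) by (apply Rdiv_le_0_compat; lra).
    assert (Htele : forall k, f (t1 + INR k * h) - f t1 <= INR k * (C * (h * h))).
    { induction k as [|k IH]; [simpl; replace (t1 + 0 * h) with t1 by ring; lra|].
      rewrite S_INR. replace (t1 + (INR k + 1) * h) with (t1 + INR k * h + h) by ring.
      assert (0 <= INR k * h) by (apply Rmult_le_pos; auto; apply pos_INR).
      pose proof (Hinc (t1 + INR k * h) h ltac:(lra) Hh). lra. }
    specialize (Htele n). replace (t1 + INR n * h) with t2 in Htele by (unfold h; field; lra).
    replace (C * ((t2 - t1) * (t2 - t1))) with (INR n * (INR n * (C * (h * h))))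
      by (unfold h; field; lra).
    apply Rmult_le_compat_l; lra. }
  apply Rnot_lt_le. intros Hlt.
  destruct (INR_archimed (f t2 - f t1) (C * ((t2 - t1) * (t2 - t1)))) as [n Hn]; [lra|].
  destruct n as [|n].
  - simpl in Hn. assert (0 <= C * ((t2 - t1) * (t2 - t1))) by (apply Rmult_le_pos; nra). lra.
  - specialize (Hsub (S n) ltac:(lia)). lra.
Qed.

Lemma eventually_flat (f : R -> R) t0 eps : 0 < eps ->
  (forall t1 t2, t0 <= t1 -> t1 <= t2 -> f t2 <= f t1) -> (forall t, t0 <= t -> 0 <= f t) ->
  exists T, t0 <= T /\ forall t, T <= t -> f T - f t <= eps.
Proof.
  intros He Hmono Hpos. apply NNPP. intros Hnot.
  assert (Hdrop : forall T, t0 <= T -> exists t, T <= t /\ eps < f T - f t).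
  { intros T HT. apply NNPP. intros Hc. apply Hnot. exists T. split; auto.
    intros t Ht. apply Rnot_lt_le. intros Hl. apply Hc. exists t; auto. }
  assert (Hk : forall k : nat, exists T, t0 <= T /\ f T <= f t0 - INR k * eps).
  { induction k as [|k [T [HT HfT]]]; [exists t0; simpl; lra|].
    destruct (Hdrop T HT) as [t [Ht Hft]]. exists t. rewrite S_INR. lra. }
  destruct (INR_archimed eps (f t0) He) as [k Hk'].
  destruct (Hk k) as [T [HT HfT]]. specialize (Hpos T HT). lra.
Qed.

(* Once the sum of the nonincreasing functions varies by at most [eps], so does each. *)
Lemma eventually_flat_family (F : nat -> R -> R) t0 eps K : 0 < eps ->
  (forall k t1 t2, (k <= K)%nat -> t0 <= t1 -> t1 <= t2 -> F k t2 <= F k t1) ->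
  (forall k t, (k <= K)%nat -> t0 <= t -> 0 <= F k t) ->
  exists T, t0 <= T /\ forall k t, (k <= K)%nat -> T <= t -> F k T - F k t <= eps.
Proof.
  intros He Hmono Hpos.
  set (l := seq 0 (S K)).
  assert (Hl : forall k, In k l -> (k <= K)%nat) by (intros k Hk; apply in_seq in Hk; lia).
  destruct (eventually_flat (fun t => lsum (fun k => F k t) l) t0 eps He) as [T [HT Hflat]].
  - intros t1 t2 H1 H2. apply lsum_le. intros k Hk. apply Hmono; auto.
  - intros t Ht. apply lsum_nonneg. intros k Hk. apply Hpos; auto.
  - exists T. split; auto. intros k t Hk Ht.
    specialize (Hflat t Ht). rewrite <- lsum_minus in Hflat.
    eapply Rle_trans; [|apply Hflat].
    apply (lsum_ge_term (fun k => F k T - F k t)).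
    + intros j Hj. pose proof (Hmono j T t (Hl j Hj) HT Ht). lra.
    + apply in_seq. lia.
Qed.

Lemma drop_pigeonhole (H : nat -> R) (M : nat) (d R0 : R) :
  (forall k, (k <= 2 * M + 1)%nat -> H (S k) <= H k) ->
  H 0%nat - H 1%nat <= R0 -> R0 < INR M * d ->
  exists m, (m < M)%nat /\
    (H (2 * m)%nat - H (2 * m + 1)%nat) - (H (2 * m + 2)%nat - H (2 * m + 3)%nat) < d.
Proof.
  intros Hmono H01 HR. apply NNPP. intros Hnot.
  assert (Hind : forall m, (m <= M)%nat ->
            INR m * d <= (H 0%nat - H 1%nat) - (H (2 * m)%nat - H (2 * m + 1)%nat)).
  { induction m as [|m IH]; intros Hm; [simpl; lra|].
    rewrite S_INR. specialize (IH ltac:(lia)).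
    assert (d <= (H (2 * m)%nat - H (2 * m + 1)%nat) - (H (2 * m + 2)%nat - H (2 * m + 3)%nat)).
    { apply Rnot_lt_le. intros Hl. apply Hnot. exists m. split; auto; lia. }
    replace (2 * S m)%nat with (2 * m + 2)%nat by lia.
    replace (2 * m + 2 + 1)%nat with (2 * m + 3)%nat by lia. lra. }
  specialize (Hind M (le_n _)). specialize (Hmono (2 * M)%nat ltac:(lia)).
  replace (S (2 * M)) with (2 * M + 1)%nat in Hmono by lia. lra.
Qed.

Lemma lipschitz_continuity (g : R -> R) K : 0 <= K ->
  (forall a b, Rabs (g a - g b) <= K * Rabs (a - b)) -> continuity g.
Proof.
  intros HK Hl x eps He. exists (eps / (K + 1)). split; [apply Rdiv_lt_0_compat; lra|].
  intros y [_ Hy]. simpl in *. unfold R_dist in *.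
  apply Rle_lt_trans with ((K + 1) * Rabs (y - x)).
  - pose proof (Rabs_pos (y - x)). specialize (Hl y x). nra.
  - apply (Rmult_lt_compat_l (K + 1)) in Hy; [|lra].
    replace ((K + 1) * (eps / (K + 1))) with eps in Hy by (field; lra). lra.
Qed.

Definition clamp (T t tau : R) : R := Rmax T (Rmin tau t).

Lemma clamp_between T t tau : T <= t -> T <= clamp T t tau <= t.
Proof. intros. unfold clamp. destruct_minmax; lra. Qed.

Lemma clamp_id T t tau : T <= tau <= t -> clamp T t tau = tau.
Proof. intros. unfold clamp. destruct_minmax; lra. Qed.

Lemma clamp_dist_le T t a b : T <= t -> Rabs (clamp T t a - clamp T t b) <= Rabs (a - b).
Proof.
  intros. unfold clamp.
  destruct (Rle_dec a b).
  - rewrite (Rabs_left1 (a - b)) by lra. apply Rabs_le. destruct_minmax; lra.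
  - rewrite (Rabs_pos_eq (a - b)) by lra. apply Rabs_le. destruct_minmax; lra.
Qed.

(* [f] is extended by constants outside [T, t] so that the global IVT applies. *)
Lemma lipschitz_band_keeps_side (f : R -> R) B T t l u : 0 <= B -> T <= t -> l <= u ->
  (forall a b, T <= a -> a <= b -> b <= t -> Rabs (f b - f a) <= B * (b - a)) ->
  (forall tau, T <= tau <= t -> ~ (l <= f tau <= u)) ->
  (u < f T -> u < f t) /\ (f T < l -> f t < l).
Proof.
  intros HB Ht Hlu Hlip Hband.
  assert (Hcont : forall c, continuity (fun tau => f (clamp T t tau) - c)).
  { intros c. apply lipschitz_continuity with B; auto. intros a b.
    pose proof (clamp_between T t a Ht). pose proof (clamp_between T t b Ht).
    pose proof (clamp_dist_le T t a b Ht).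
    replace (f (clamp T t a) - c - (f (clamp T t b) - c))
      with (f (clamp T t a) - f (clamp T t b)) by ring.
    destruct (Rle_dec (clamp T t a) (clamp T t b)).
    - rewrite Rabs_minus_sym.
      specialize (Hlip (clamp T t a) (clamp T t b) ltac:(lra) ltac:(lra) ltac:(lra)).
      assert (clamp T t b - clamp T t a <= Rabs (clamp T t a - clamp T t b))
        by (rewrite Rabs_minus_sym; apply Rle_abs).
      nra.
    - specialize (Hlip (clamp T t b) (clamp T t a) ltac:(lra) ltac:(lra) ltac:(lra)).
      assert (clamp T t a - clamp T t b <= Rabs (clamp T t a - clamp T t b)) by apply Rle_abs.
      nra. }
  destruct (Req_dec T t) as [<-|Hne]; [split; auto|].
  split; intros Hf; apply Rnot_le_lt; intros Hft.
  - destruct (Req_dec (f t) u); [apply (Hband t); lra|].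
    destruct (IVT (fun tau => - (f (clamp T t tau) - u)) T t) as [z [Hz1 Hz2]];
      try (rewrite clamp_id by lra); try lra.
    { apply continuity_opp. apply Hcont. }
    rewrite clamp_id in Hz2 by lra. apply (Hband z); lra.
  - destruct (Req_dec (f t) l); [apply (Hband t); lra|].
    destruct (IVT (fun tau => f (clamp T t tau) - l) T t) as [z [Hz1 Hz2]];
      try (rewrite clamp_id by lra); try lra; auto.
    rewrite clamp_id in Hz2 by lra. apply (Hband z); lra.
Qed.

Lemma reach_lt N E i j : reach N E i j -> (j < N)%nat.
Proof. induction 1; auto. Qed.

Lemma reach_crossing_edge N (E : nat -> nat -> Prop) (sel : nat -> bool) u v :
  reach N E u v -> sel u = true -> sel v = false ->
  exists p q, (p < N)%nat /\ (q < N)%nat /\ sel p = true /\ sel q = false /\ E p q.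
Proof.
  induction 1 as [i Hi|i j k Hr IH Hk Ejk]; intros Hu Hv; [congruence|].
  destruct (sel j) eqn:Ej; [|apply IH; auto].
  exists j, k. repeat split; auto. eapply reach_lt; eauto.
Qed.

Lemma integral_infinite_from (a : R -> R) amax T M :
  integral_infinite a -> 0 <= T -> 0 <= amax -> (forall t, 0 <= t -> a t <= amax) ->
  exists t, T <= t /\ ex_RInt a T t /\ M <= RInt a T t.
Proof.
  intros Hinf HT Ham Ha.
  assert (Hbound : forall t, 0 <= t -> ex_RInt a 0 t -> RInt a 0 t <= amax * t).
  { intros t Ht Hex. replace (amax * t) with (RInt (fun _ => amax) 0 t).
    - apply RInt_le; auto; [apply (ex_RInt_const (V:=R_NormedModule))|].
      intros; apply Ha; lra.
    - rewrite RInt_const. unfold scal; simpl; unfold mult; simpl. ring. }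
  destruct (Hinf (Rmax M 0 + amax * T + 1)) as [T2 [HT2 [pr Hpr]]].
  pose proof (Rmax_l M 0). pose proof (Rmax_r M 0).
  rewrite <- RInt_Reals in Hpr. apply ex_RInt_Reals_1 in pr.
  destruct (Rle_dec T2 T).
  - exfalso. pose proof (Hbound T2 HT2 pr).
    assert (amax * T2 <= amax * T) by (apply Rmult_le_compat_l; lra). lra.
  - exists T2. split; [lra|].
    assert (E1 : ex_RInt a 0 T) by (apply (ex_RInt_Chasles_1 a 0 T T2); auto; lra).
    assert (E2 : ex_RInt a T T2) by (apply (ex_RInt_Chasles_2 a 0 T T2); auto; lra).
    split; auto.
    pose proof (RInt_Chasles a 0 T T2 E1 E2). unfold plus in H1; simpl in H1.
    pose proof (Hbound T HT E1). lra.
Qed.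

Definition excess (n : nat) (x : nat -> R -> R) (lam t : R) : R :=
  lsum (fun i => Rmax (x i t - lam) 0) (seq 0 n).

Lemma excess_nonneg n x lam t : 0 <= excess n x lam t.
Proof. apply lsum_nonneg. intros. apply Rmax_r. Qed.

Lemma excess_level_antitone n x l1 l2 t : l1 <= l2 -> excess n x l2 t <= excess n x l1 t.
Proof. intros. apply lsum_le. intros. destruct_minmax; lra. Qed.

Lemma excess_level_drop_le n x l d t : 0 <= d ->
  excess n x l t - excess n x (l + d) t <= INR n * d.
Proof.
  intros. unfold excess. rewrite <- lsum_minus. apply lsum_seq_le_const; auto.
  intros. destruct_minmax; lra.
Qed.

Definition trapezoid (a d y : R) : R :=
  Rmax (y - a) 0 - Rmax (y - (a + d)) 0 - Rmax (y - (a + 2 * d)) 0 + Rmax (y - (a + 3 * d)) 0.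

Lemma trapezoid_nonneg a d y : 0 < d -> 0 <= trapezoid a d y.
Proof. intros. unfold trapezoid. destruct_minmax; lra. Qed.

Lemma trapezoid_plateau a d y : 0 < d -> a + d <= y <= a + 2 * d -> trapezoid a d y = d.
Proof. intros. unfold trapezoid. destruct_minmax; lra. Qed.

Lemma excess_second_difference n x a d t :
  excess n x a t - excess n x (a + d) t - excess n x (a + 2 * d) t + excess n x (a + 3 * d) t =
  lsum (fun i => trapezoid a d (x i t)) (seq 0 n).
Proof. unfold excess. rewrite <- !lsum_minus, <- lsum_plus. reflexivity. Qed.

Lemma not_in_band_of_second_difference_lt n x a d t i : 0 < d -> (i < n)%nat ->
  excess n x a t - excess n x (a + d) t - excess n x (a + 2 * d) t + excess n x (a + 3 * d) t < d ->
  ~ (a + d <= x i t <= a + 2 * d).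
Proof.
  intros Hd Hi Hsmall Hband. rewrite excess_second_difference in Hsmall.
  assert (trapezoid a d (x i t) <= lsum (fun i => trapezoid a d (x i t)) (seq 0 n)).
  { apply (lsum_ge_term (fun i => trapezoid a d (x i t))).
    - intros. apply trapezoid_nonneg; auto.
    - apply in_seq. lia. }
  rewrite trapezoid_plateau in H by auto. lra.
Qed.

(* Split [a, b] into [2M+1] levels.  All excesses eventually become flat up to [d/8], and
   by pigeonhole some window of four consecutive levels has a second difference below
   [d/4] at that time, hence below [d] forever after: nobody sits in its middle band. *)
Lemma eventually_avoided_band n x t0 a b : a < b ->
  (forall lam t1 t2, a <= lam <= b -> t0 <= t1 -> t1 <= t2 ->
     excess n x lam t2 <= excess n x lam t1) ->
  exists l u T, a < l < u /\ u <= b /\ t0 <= T /\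
    forall i t, (i < n)%nat -> T <= t -> ~ (l <= x i t <= u).
Proof.
  intros Hab Hmono.
  set (M := (4 * n + 4)%nat). set (K := (2 * M + 1)%nat).
  assert (HKr : 0 < INR K) by (apply lt_0_INR; unfold K; lia).
  set (d := (b - a) / INR K).
  assert (Hd : 0 < d) by (apply Rdiv_lt_0_compat; lra).
  set (lam := fun k : nat => a + INR k * d).
  assert (Hlam : forall k, (k <= K)%nat -> a <= lam k <= b).
  { intros k Hk. apply le_INR in Hk. pose proof (pos_INR k).
    replace b with (a + INR K * d) by (unfold d; field; lra). unfold lam. nra. }
  assert (Hlam_shift : forall k j, lam (k + j)%nat = lam k + INR j * d)
    by (intros; unfold lam; rewrite plus_INR; ring).
  destruct (eventually_flat_family (fun k t => excess n x (lam k) t) t0 (d / 8) K)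
    as [T [HT Hflat]].
  { lra. }
  { intros k t1 t2 Hk. apply Hmono. auto. }
  { intros. apply excess_nonneg. }
  destruct (drop_pigeonhole (fun k => excess n x (lam k) T) M (d / 4) (INR n * d)) as [m [Hm Hgap]].
  - intros k Hk. apply excess_level_antitone. unfold lam. rewrite S_INR. nra.
  - replace (lam 1%nat) with (lam 0%nat + d) by (unfold lam; simpl; ring).
    apply excess_level_drop_le. lra.
  - unfold M. rewrite plus_INR, mult_INR. simpl. pose proof (pos_INR n). nra.
  - set (a' := lam (2 * m)%nat) in *.
    assert (E1 : lam (2 * m + 1)%nat = a' + d) by (unfold a'; rewrite Hlam_shift; cbn [INR]; ring).
    assert (E2 : lam (2 * m + 2)%nat = a' + 2 * d) by (unfold a'; rewrite Hlam_shift; cbn [INR]; ring).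
    assert (E3 : lam (2 * m + 3)%nat = a' + 3 * d) by (unfold a'; rewrite Hlam_shift; cbn [INR]; ring).
    cbv beta in Hgap. rewrite E1, E2, E3 in Hgap.
    assert (Ha' : a <= a') by (apply Hlam; unfold K; lia).
    assert (Hu : a' + 2 * d <= b) by (rewrite <- E2; apply Hlam; unfold K; lia).
    exists (a' + d), (a' + 2 * d), T. repeat split; try lra.
    intros i t Hi Ht. apply not_in_band_of_second_difference_lt with n; auto.
    pose proof (Hflat (2 * m + 1)%nat t ltac:(unfold K; lia) Ht) as F1.
    pose proof (Hflat (2 * m + 2)%nat t ltac:(unfold K; lia) Ht) as F2.
    cbv beta in F1, F2. rewrite E1 in F1. rewrite E2 in F2.
    pose proof (Hmono a' T t ltac:(lra) HT Ht).
    pose proof (Hmono (a' + 3 * d) T t ltac:(rewrite <- E3; apply Hlam; unfold K; lia) HT Ht).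
    lra.
Qed.

Section Dynamics.

Variables (N : nat) (s : nat -> R) (alpha : nat -> nat -> R -> R) (amax : R).

Hypothesis s_pos : forall i, (i < N)%nat -> 0 < s i.
Hypothesis s_antitone : forall i j, (i <= j)%nat -> (j < N)%nat -> s j <= s i.
Hypothesis alpha_sym :
  forall i j t, (i < N)%nat -> (j < N)%nat -> 0 <= t -> alpha i j t = alpha j i t.
Hypothesis alpha_ge0 : forall i j t, (i < N)%nat -> (j < N)%nat -> 0 <= t -> 0 <= alpha i j t.
Hypothesis alpha_le : forall i j t, (i < N)%nat -> (j < N)%nat -> 0 <= t -> alpha i j t <= amax.
Hypothesis amax_ge0 : 0 <= amax.

Definition flow (x : nat -> R -> R) (i k : nat) (t : R) : R :=
  alpha i k t * (sat (s k) (x k t) - sat (s i) (x i t)).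

Lemma rhs_lsum x i t : rhs N alpha s x i t = lsum (fun k => flow x i k t) (seq 0 N).
Proof. unfold rhs. induction (seq 0 N) as [|a l IH]; simpl; [reflexivity|]. rewrite IH. reflexivity. Qed.

Definition speed_bound : R := INR N * (amax * (2 * s 0%nat)).

Lemma speed_bound_nonneg : (0 < N)%nat -> 0 <= speed_bound.
Proof.
  intros HN. pose proof (pos_INR N). pose proof (s_pos 0 HN).
  unfold speed_bound. apply Rmult_le_pos; nra.
Qed.

Lemma rhs_abs_le x i t : (i < N)%nat -> 0 <= t -> Rabs (rhs N alpha s x i t) <= speed_bound.
Proof.
  intros Hi Ht. rewrite rhs_lsum. eapply Rle_trans; [apply Rabs_lsum_le|].
  apply lsum_seq_le_const; [pose proof (s_pos 0 ltac:(lia)); nra|].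
  intros k Hk. unfold flow. rewrite Rabs_mult, (Rabs_pos_eq (alpha i k t)) by auto.
  pose proof (sat_abs_le (s k) (x k t) (s_pos k Hk)).
  pose proof (sat_abs_le (s i) (x i t) (s_pos i Hi)).
  pose proof (s_antitone 0 k ltac:(lia) Hk). pose proof (s_antitone 0 i ltac:(lia) Hi).
  assert (Rabs (sat (s k) (x k t) - sat (s i) (x i t)) <= 2 * s 0%nat)
    by (eapply Rle_trans; [apply Rabs_triang|rewrite Rabs_Ropp; lra]).
  apply Rmult_le_compat; auto using Rabs_pos.
Qed.

Lemma rhs_opp x i t : (i < N)%nat ->
  rhs N alpha s (fun j t => - x j t) i t = - rhs N alpha s x i t.
Proof.
  intros Hi. rewrite !rhs_lsum, <- lsum_opp. apply lsum_ext. intros k Hk. apply in_seq in Hk.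
  unfold flow. rewrite !sat_opp by (apply s_pos; lia). ring.
Qed.

(* The flows inside a set of agents cancel by symmetry of [alpha]. *)
Lemma selected_rhs_eq_boundary_flow x (sel : nat -> bool) t : 0 <= t ->
  lsum (fun i => if sel i then rhs N alpha s x i t else 0) (seq 0 N) =
  lsum (fun i => if sel i then lsum (fun k => if sel k then 0 else flow x i k t) (seq 0 N) else 0)
    (seq 0 N).
Proof.
  intros Ht.
  assert (Hint : lsum (fun i => lsum (fun k => if sel i then if sel k then flow x i k t else 0 else 0)
                   (seq 0 N)) (seq 0 N) = 0).
  { apply lsum_antisym. intros i k Hi Hk. apply in_seq in Hi. apply in_seq in Hk.
    destruct (sel i), (sel k); try ring.
    unfold flow. rewrite (alpha_sym i k t) by (auto; lia). ring. }
  match goal with |- _ = ?B => transitivity (0 + B); [rewrite <- Hint at 1|ring] end.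
  rewrite <- lsum_plus. apply lsum_ext. intros i _. destruct (sel i); [|rewrite lsum_zero; ring].
  rewrite rhs_lsum, <- lsum_plus. apply lsum_ext. intros k _. destruct (sel k); ring.
Qed.

Definition solves (x : nat -> R -> R) (t0 : R) : Prop :=
  forall i, (i < N)%nat -> forall t1 t2, t0 <= t1 -> t1 <= t2 ->
    ex_RInt (rhs N alpha s x i) t1 t2 /\ x i t2 - x i t1 = RInt (rhs N alpha s x i) t1 t2.

Lemma solves_opp x t0 : solves x t0 -> solves (fun j t => - x j t) t0.
Proof.
  intros Hx i Hi t1 t2 H1 H2. destruct (Hx i Hi t1 t2 H1 H2) as [Hex Heq].
  assert (E : forall t, rhs N alpha s (fun j t => - x j t) i t = opp (rhs N alpha s x i t))
    by (intros; apply rhs_opp; auto).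
  split.
  - eapply ex_RInt_ext; [intros; symmetry; apply E|]. apply (ex_RInt_opp (V:=R_NormedModule)); auto.
  - rewrite (RInt_ext _ (fun t => opp (rhs N alpha s x i t))) by (intros; apply E).
    rewrite (RInt_opp (V:=R_CompleteNormedModule)), <- Heq by auto. unfold opp; simpl. ring.
Qed.

Lemma le_output (x : nat -> R -> R) i p t : (i < N)%nat -> p <= s i -> p <= x i t -> p <= sat (s i) (x i t).
Proof.
  intros Hi Hp Hx. apply Rle_trans with (sat (s i) p).
  - apply le_sat; auto.
  - apply sat_mono; auto.
Qed.

(* No hypothesis on the last agent: its output never exceeds [s (N - 1)]. *)
Lemma output_le (x : nat -> R -> R) k q t : (k < N)%nat -> s (N - 1) <= q ->
  ((k < N - 1)%nat -> x k t <= q) -> sat (s k) (x k t) <= q.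
Proof.
  intros Hk Hq Hx. destruct (Nat.lt_ge_cases k (N - 1)) as [Hk'|Hk'].
  - pose proof (s_pos k Hk). pose proof (s_pos (N - 1) ltac:(lia)).
    apply Rle_trans with (sat (s k) q); [apply sat_mono; auto|apply sat_le; lra].
  - replace k with (N - 1)%nat by lia. pose proof (sat_le_level (s (N - 1)) (x (N - 1)%nat t)).
    pose proof (s_pos (N - 1) ltac:(lia)). lra.
Qed.

Lemma flow_le_of_outputs x i k t p q : (i < N)%nat -> (k < N)%nat -> 0 <= t ->
  p <= sat (s i) (x i t) -> sat (s k) (x k t) <= q ->
  flow x i k t <= alpha i k t * (q - p).
Proof. intros. unfold flow. pose proof (alpha_ge0 i k t). apply Rmult_le_compat_l; auto; lra. Qed.

Section Trajectory.

Variables (x : nat -> R -> R) (t0 : R).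
Hypothesis t0_ge0 : 0 <= t0.
Hypothesis x_solves : solves x t0.

Lemma x_lipschitz i t1 t2 : (i < N)%nat -> t0 <= t1 -> t1 <= t2 ->
  Rabs (x i t2 - x i t1) <= speed_bound * (t2 - t1).
Proof.
  intros Hi H1 H2. destruct (x_solves i Hi t1 t2 H1 H2) as [Hex ->].
  rewrite Rmult_comm. apply abs_RInt_le_const; auto.
  intros t Ht. apply rhs_abs_le; auto. lra.
Qed.

Lemma selected_increment_le (sel : nat -> bool) (g : R -> R) t1 t2 : t0 <= t1 -> t1 <= t2 ->
  (forall tau, t1 <= tau <= t2 ->
     lsum (fun i => if sel i then rhs N alpha s x i tau else 0) (seq 0 N) <= g tau) ->
  ex_RInt g t1 t2 ->
  lsum (fun i => if sel i then x i t2 - x i t1 else 0) (seq 0 N) <= RInt g t1 t2.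
Proof.
  intros H1 H2 Hg Hexg.
  set (F := fun i tau => if sel i then rhs N alpha s x i tau else 0).
  assert (HF : forall i, In i (seq 0 N) -> ex_RInt (F i) t1 t2).
  { intros i Hi. apply in_seq in Hi. unfold F. destruct (sel i).
    - apply (x_solves i ltac:(lia) t1 t2 H1 H2).
    - apply (ex_RInt_const t1 t2 0). }
  destruct (lsum_RInt F (seq 0 N) t1 t2 HF) as [Hex HI].
  replace (lsum (fun i => if sel i then x i t2 - x i t1 else 0) (seq 0 N))
    with (lsum (fun i => RInt (F i) t1 t2) (seq 0 N)).
  - rewrite <- HI. apply RInt_le; auto. intros tau Ht. apply Hg. lra.
  - apply lsum_ext. intros i Hi. apply in_seq in Hi. unfold F. destruct (sel i).
    + symmetry. apply (x_solves i ltac:(lia) t1 t2 H1 H2).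
    + rewrite RInt_const. unfold scal; simpl; unfold mult; simpl. ring.
Qed.

(* Over [tau, t1] the states move by at most [e]; an agent above [lam] at [t1] is at least
   [lam - e] at [tau], and one at most [lam] at [t1] is at most [lam + e]. *)
Lemma flow_across_level_le lam i k t1 tau : (i < N)%nat -> (k < N)%nat ->
  s (N - 1) <= lam -> lam < s i -> t0 <= tau -> tau <= t1 ->
  lam < x i t1 -> ((k < N - 1)%nat -> x k t1 <= lam) ->
  flow x i k tau <= amax * (2 * (speed_bound * (t1 - tau))).
Proof.
  intros Hi Hk Hlam Hlam_i Htau Ht1 Hxi Hxk.
  set (e := speed_bound * (t1 - tau)).
  assert (He : 0 <= e) by (apply Rmult_le_pos; [apply speed_bound_nonneg; lia|lra]).
  assert (Hmove : forall j, (j < N)%nat -> Rabs (x j t1 - x j tau) <= e)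
    by (intros; apply x_lipschitz; auto).
  assert (Hyi : lam - e <= sat (s i) (x i tau)).
  { apply le_output; [auto|lra|]. specialize (Hmove i Hi). apply Rabs_le_between in Hmove. lra. }
  assert (Hyk : sat (s k) (x k tau) <= lam + e).
  { apply output_le; [auto|lra|]. intros Hk'.
    specialize (Hmove k Hk). apply Rabs_le_between in Hmove. specialize (Hxk Hk'). lra. }
  eapply Rle_trans; [apply (flow_le_of_outputs x i k tau (lam - e) (lam + e)); auto; lra|].
  pose proof (alpha_ge0 i k tau Hi Hk ltac:(lra)). pose proof (alpha_le i k tau Hi Hk ltac:(lra)).
  nra.
Qed.

Lemma excess_increment_le lam t h : (0 < N)%nat ->
  s (N - 1) <= lam -> (forall i, (i < N - 1)%nat -> lam < s i) -> t0 <= t -> 0 <= h ->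
  excess (N - 1) x lam (t + h) - excess (N - 1) x lam t <=
    INR N * (INR N * (amax * (2 * speed_bound))) * (h * h).
Proof.
  intros HN Hlam Hlam_s Ht Hh.
  pose proof (speed_bound_nonneg HN) as HB.
  set (sel := fun i => ((i <? N - 1)%nat && if Rlt_dec lam (x i (t + h)) then true else false)%bool).
  assert (Hflow0 : 0 <= amax * (2 * (speed_bound * h))) by (apply Rmult_le_pos; [auto|nra]).
  assert (Hrow0 : 0 <= INR N * (amax * (2 * (speed_bound * h))))
    by (apply Rmult_le_pos; [apply pos_INR|auto]).
  apply Rle_trans with (lsum (fun i => if sel i then x i (t + h) - x i t else 0) (seq 0 N)).
  { unfold excess. rewrite !(lsum_seq_prefix _ (N - 1) N), <- lsum_minus by lia.
    apply lsum_le. intros i _. unfold sel.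
    destruct (i <? N - 1)%nat; simpl; [|lra].
    destruct (Rlt_dec lam (x i (t + h))); destruct_minmax; lra. }
  replace (INR N * (INR N * (amax * (2 * speed_bound))) * (h * h))
    with (RInt (fun _ => INR N * (INR N * (amax * (2 * (speed_bound * h))))) t (t + h))
    by (rewrite RInt_const; unfold scal; simpl; unfold mult; simpl; ring).
  apply selected_increment_le; [lra|lra| |apply (ex_RInt_const (V:=R_NormedModule))].
  intros tau Htau. rewrite selected_rhs_eq_boundary_flow by lra.
  apply lsum_seq_le_const; auto.
  intros i Hi. destruct (sel i) eqn:Ei; [|auto].
  apply lsum_seq_le_const; auto.
  intros k Hk. destruct (sel k) eqn:Ek; [auto|].
  unfold sel in Ei, Ek. apply andb_prop in Ei as [Ei1 Ei2]. apply Nat.ltb_lt in Ei1.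
  destruct (Rlt_dec lam (x i (t + h))) as [Hxi|]; [|discriminate].
  eapply Rle_trans; [apply (flow_across_level_le lam i k (t + h) tau); auto; try lia; try lra|].
  - intros Hk'. replace (k <? N - 1)%nat with true in Ek by (symmetry; apply Nat.ltb_lt; auto).
    destruct (Rlt_dec lam (x k (t + h))); [discriminate|lra].
  - apply Rmult_le_compat_l; auto. apply Rmult_le_compat_l; [lra|]. apply Rmult_le_compat_l; lra.
Qed.

Lemma excess_antitone lam t1 t2 : (0 < N)%nat ->
  s (N - 1) <= lam -> (forall i, (i < N - 1)%nat -> lam < s i) -> t0 <= t1 -> t1 <= t2 ->
  excess (N - 1) x lam t2 <= excess (N - 1) x lam t1.
Proof.
  intros HN Hlam Hlam_s.
  apply (antitone_of_quadratic_increment (excess (N - 1) x lam) t0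
           (INR N * (INR N * (amax * (2 * speed_bound))))).
  - pose proof (pos_INR N). pose proof (speed_bound_nonneg HN).
    apply Rmult_le_pos; auto. apply Rmult_le_pos; auto. nra.
  - intros t h Ht Hh. apply excess_increment_le; auto.
Qed.

(* Inside the selected set the flows cancel; every flow leaving it is nonpositive, and
   the one along [p -> q] is at most the band width times [-alpha p q]. *)
Lemma selected_rhs_le_crossing_flow (sel : nat -> bool) l u p q tau :
  s (N - 1) <= l -> l < u -> t0 <= tau ->
  (p < N)%nat -> (q < N)%nat -> sel p = true -> sel q = false ->
  (forall i, sel i = true -> (i < N - 1)%nat /\ u <= s i /\ u < x i tau) ->
  (forall i, (i < N - 1)%nat -> sel i = false -> x i tau < l) ->
  lsum (fun i => if sel i then rhs N alpha s x i tau else 0) (seq 0 N)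
  <= - (u - l) * alpha p q tau.
Proof.
  intros Hl Hlu Htau Hp Hq Hselp Hselq Hsel Hunsel.
  assert (Hflow : forall i k, sel i = true -> (k < N)%nat -> sel k = false ->
            flow x i k tau <= - (u - l) * alpha i k tau).
  { intros i k Hi Hk Hk'. destruct (Hsel i Hi) as [HiN [Hus Hup]].
    replace (- (u - l) * alpha i k tau) with (alpha i k tau * (l - u)) by ring.
    apply flow_le_of_outputs; [lia|auto|lra| |].
    - apply le_output; [lia|auto|lra].
    - apply output_le; auto. intros Hk''. left. apply Hunsel; auto. }
  assert (Hflow0 : forall i k, sel i = true -> (k < N)%nat -> sel k = false -> flow x i k tau <= 0).
  { intros i k Hi Hk Hk'. specialize (Hflow i k Hi Hk Hk').
    pose proof (alpha_ge0 i k tau ltac:(destruct (Hsel i Hi); lia) Hk ltac:(lra)). nra. }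
  rewrite selected_rhs_eq_boundary_flow by lra.
  eapply Rle_trans; [apply lsum_le_term with (p := p)|]; [| apply in_seq; lia |].
  - intros i _. destruct (sel i) eqn:Ei; [|lra].
    apply lsum_nonpos. intros k Hk. apply in_seq in Hk.
    destruct (sel k) eqn:Ek; [lra|]. apply Hflow0; auto; lia.
  - rewrite Hselp. eapply Rle_trans; [apply lsum_le_term with (p := q)|]; [| apply in_seq; lia |].
    + intros k Hk. apply in_seq in Hk. destruct (sel k) eqn:Ek; [lra|]. apply Hflow0; auto; lia.
    + rewrite Hselq. apply Hflow; auto.
Qed.

(* Along an edge with infinite integral leaving the frozen set, the total state of the
   set would decrease without bound. *)
Lemma no_frozen_split (sel : nat -> bool) l u T i0 :
  integrally_connected N alpha -> s (N - 1) <= l -> l < u -> t0 <= T ->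
  (forall i, sel i = true -> (i < N - 1)%nat /\ u <= s i /\ forall t, T <= t -> u < x i t) ->
  (forall i, (i < N - 1)%nat -> sel i = false -> forall t, T <= t -> x i t < l) ->
  sel i0 = true -> False.
Proof.
  intros Hconn Hl Hlu HT Hsel Hunsel Hi0.
  assert (Hsel_lt : forall i, sel i = true -> (i < N - 1)%nat) by (intros i Hi; apply Hsel; auto).
  pose proof (Hsel_lt i0 Hi0) as Hi0N.
  assert (HselN : sel (N - 1)%nat = false)
    by (destruct (sel (N - 1)%nat) eqn:E; auto; apply Hsel_lt in E; lia).
  destruct (reach_crossing_edge N (integral_edge alpha) sel i0 (N - 1)%nat
              (Hconn i0 (N - 1)%nat ltac:(lia) ltac:(lia)) Hi0 HselN)
    as [p [q [Hp [Hq [Hselp [Hselq Hpq]]]]]].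
  set (C0 := lsum (fun i => if sel i then u - x i T else 0) (seq 0 N)).
  destruct (integral_infinite_from (alpha p q) amax T (- C0 / (u - l) + 1) Hpq ltac:(lra) amax_ge0)
    as [t1 [Ht1 [Hex Hint]]].
  { intros t Ht. apply alpha_le; auto. }
  assert (Hedge : forall tau, T <= tau <= t1 ->
            lsum (fun i => if sel i then rhs N alpha s x i tau else 0) (seq 0 N)
            <= - (u - l) * alpha p q tau).
  { intros tau Htau. apply selected_rhs_le_crossing_flow; auto; try lra.
    - intros i Hi. destruct (Hsel i Hi) as [HiN [Hus Hup]]. repeat split; auto. apply Hup; lra.
    - intros i Hi Hi'. apply Hunsel; auto; lra. }
  assert (Hdrop := selected_increment_le sel (fun tau => - (u - l) * alpha p q tau) T t1 HT Ht1
                     Hedge ltac:(apply (ex_RInt_scal (V:=R_NormedModule)); auto)).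
  replace (RInt (fun tau => - (u - l) * alpha p q tau) T t1) with (- (u - l) * RInt (alpha p q) T t1)
    in Hdrop by (symmetry; apply (RInt_scal (V:=R_CompleteNormedModule)); auto).
  assert (C0 <= lsum (fun i => if sel i then x i t1 - x i T else 0) (seq 0 N)).
  { apply lsum_le. intros i _. destruct (sel i) eqn:Ei; [|lra].
    destruct (Hsel i Ei) as [_ [_ Hup]]. pose proof (Hup t1 Ht1). lra. }
  assert (- (u - l) * RInt (alpha p q) T t1 <= - (u - l) * (- C0 / (u - l) + 1))
    by (apply Rmult_le_compat_neg_l; lra).
  replace (- (u - l) * (- C0 / (u - l) + 1)) with (C0 - (u - l)) in H0 by (field; lra).
  lra.
Qed.

(* If some agent starts above the avoided band, the agents above it form a frozen split
   ruled out by [no_frozen_split]; otherwise all of them stay below the band. *)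
Lemma eventually_below b : integrally_connected N alpha -> (0 < N)%nat ->
  s (N - 1) < b -> (forall i, (i < N - 1)%nat -> b < s i) ->
  exists T, t0 <= T /\ forall i t, (i < N - 1)%nat -> T <= t -> x i t <= b.
Proof.
  intros Hconn HN Hb Hb_s.
  destruct (eventually_avoided_band (N - 1) x t0 (s (N - 1)) b) as [l [u [T [Hlu [Hub [HT Havoid]]]]]];
    [lra| |].
  { intros lam t1 t2 Hlam. apply excess_antitone; auto; [lra|].
    intros i Hi. specialize (Hb_s i Hi). lra. }
  assert (Hside : forall i t, (i < N - 1)%nat -> T <= t ->
            (u < x i T -> u < x i t) /\ (x i T < l -> x i t < l)).
  { intros i t Hi Ht. apply (lipschitz_band_keeps_side (x i) speed_bound); auto; try lra.
    - apply speed_bound_nonneg; auto.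
    - intros a c Ha Hac Hc. apply x_lipschitz; auto; lia || lra.
    - intros tau Htau. apply Havoid; auto; lra. }
  assert (Hbelow : forall i, (i < N - 1)%nat -> x i T <= u -> forall t, T <= t -> x i t < l).
  { intros i Hi HxT t Ht. apply (Hside i t Hi Ht).
    apply Rnot_le_lt. intros Hl. apply (Havoid i T Hi ltac:(lra)). lra. }
  destruct (classic (exists i0, (i0 < N - 1)%nat /\ u < x i0 T)) as [[i0 [Hi0 Hx0]]|Hnone].
  - exfalso.
    set (sel := fun i => ((i <? N - 1)%nat && if Rlt_dec u (x i T) then true else false)%bool).
    apply (no_frozen_split sel l u T i0); auto; try lra.
    + intros i Hi. unfold sel in Hi. apply andb_prop in Hi as [Hi1 Hi2]. apply Nat.ltb_lt in Hi1.
      destruct (Rlt_dec u (x i T)) as [Hx|]; [|discriminate].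
      repeat split; auto; [pose proof (Hb_s i Hi1); lra|]. intros t Ht. apply (Hside i t Hi1 Ht); auto.
    + intros i Hi Hi'. unfold sel in Hi'. replace (i <? N - 1)%nat with true in Hi'
        by (symmetry; apply Nat.ltb_lt; auto).
      destruct (Rlt_dec u (x i T)); [discriminate|]. apply Hbelow; auto; lra.
    + unfold sel. replace (i0 <? N - 1)%nat with true by (symmetry; apply Nat.ltb_lt; auto).
      destruct (Rlt_dec u (x i0 T)); [reflexivity|lra].
  - exists T. split; auto. intros i t Hi Ht.
    assert (x i T <= u) by (apply Rnot_lt_le; intros Hx; apply Hnone; exists i; auto).
    pose proof (Hbelow i Hi H t Ht). lra.
Qed.

End Trajectory.

Lemma eventually_within x t0 b : 0 <= t0 -> solves x t0 ->
  integrally_connected N alpha -> (0 < N)%nat ->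
  s (N - 1) < b -> (forall i, (i < N - 1)%nat -> b < s i) ->
  exists T, t0 <= T /\ forall i t, (i < N - 1)%nat -> T <= t -> Rabs (x i t) <= b.
Proof.
  intros Ht0 Hx Hconn HN Hb Hb_s.
  destruct (eventually_below x t0 Ht0 Hx b Hconn HN Hb Hb_s) as [T1 [HT1 Hup]].
  destruct (eventually_below (fun j t => - x j t) t0 Ht0 (solves_opp x t0 Hx) b Hconn HN Hb Hb_s)
    as [T2 [HT2 Hlow]].
  exists (Rmax T1 T2). split; [eapply Rle_trans; [apply HT1|apply Rmax_l]|].
  intros i t Hi Ht. pose proof (Rmax_l T1 T2). pose proof (Rmax_r T1 T2).
  specialize (Hup i t Hi ltac:(lra)). specialize (Hlow i t Hi ltac:(lra)).
  apply Rabs_le. lra.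
Qed.

End Dynamics.

Lemma solves_of_is_solution N s alpha x t0 :
  is_solution N alpha s x t0 -> solves N s alpha x t0.
Proof.
  intros Hsol i Hi t1 t2 H1 H2.
  destruct (Hsol i Hi t2 ltac:(lra)) as [pr2 E2]. destruct (Hsol i Hi t1 ltac:(lra)) as [pr1 E1].
  rewrite <- RInt_Reals in E1, E2. apply ex_RInt_Reals_1 in pr2.
  assert (Ha : ex_RInt (rhs N alpha s x i) t0 t1)
    by (apply (ex_RInt_Chasles_1 (V:=R_CompleteNormedModule) _ t0 t1 t2); auto; lra).
  assert (Hb : ex_RInt (rhs N alpha s x i) t1 t2)
    by (apply (ex_RInt_Chasles_2 (V:=R_CompleteNormedModule) _ t0 t1 t2); auto; lra).
  split; auto.
  pose proof (RInt_Chasles (rhs N alpha s x i) t0 t1 t2 Ha Hb). unfold plus in H; simpl in H.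
  lra.
Qed.

Lemma antitone_of_decreasing_succ (s : nat -> R) N :
  (forall i, (S i < N)%nat -> s (S i) < s i) ->
  forall i j, (i <= j)%nat -> (j < N)%nat -> s j <= s i.
Proof.
  intros Hdec i j Hij Hj. induction Hij as [|j Hij IH]; [lra|].
  pose proof (Hdec j Hj). specialize (IH ltac:(lia)). lra.
Qed.

Theorem lemma7 (N : nat) (s : nat -> R) (alpha : nat -> nat -> R -> R)
  (amin amax : R) (t0 : R) (x : nat -> R -> R) :
  (forall i, (S i < N)%nat -> s (S i) < s i) ->
  (forall i, (i < N)%nat -> 0 < s i) ->
  (forall i j t, (i < N)%nat -> (j < N)%nat -> 0 <= t -> alpha i j t = alpha j i t) ->
  (forall i j t, (i < N)%nat -> (j < N)%nat -> 0 <= t -> 0 <= alpha i j t) ->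
  (forall i j, (i < N)%nat -> (j < N)%nat -> null_set (fun t => 0 <= t /\ ~ continuity_pt (alpha i j) t)) ->
  integrally_connected N alpha ->
  0 < amin -> amin <= amax ->
  (forall i j t, (i < N)%nat -> (j < N)%nat -> 0 <= t ->
     alpha i j t = 0 \/ (amin <= alpha i j t /\ alpha i j t <= amax)) ->
  0 <= t0 ->
  is_solution N alpha s x t0 ->
  (exists T, t0 <= T /\
     forall i, (S i < N)%nat -> forall t, T <= t ->
       - s i < x i t < s i) /\
  (forall i, (S i < N)%nat -> forall eps, 0 < eps ->
     exists T, forall t, T <= t -> Rabs (x i t) <= s (N - 1)%nat + eps).
Proof.
  intros Hdec Hpos Hsym Hge0 _ Hconn Hamin Hamax Hrange Ht0 Hsol.
  destruct (Nat.lt_ge_cases N 2) as [HN|HN].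
  { split; [exists t0; split; [lra|intros; lia]|intros; lia]. }
  pose proof (antitone_of_decreasing_succ s N Hdec) as Hanti.
  assert (Hle : forall i j t, (i < N)%nat -> (j < N)%nat -> 0 <= t -> alpha i j t <= amax)
    by (intros i j t Hi Hj Ht; destruct (Hrange i j t Hi Hj Ht) as [->|[]]; lra).
  assert (Hgap : s (N - 1)%nat < s (N - 2)%nat)
    by (replace (N - 1)%nat with (S (N - 2)) by lia; apply Hdec; lia).
  assert (Hs_top : forall i, (i < N - 1)%nat -> s (N - 2)%nat <= s i) by (intros; apply Hanti; lia).
  assert (Hwithin : forall b, s (N - 1)%nat < b -> b < s (N - 2)%nat ->
            exists T, t0 <= T /\ forall i t, (i < N - 1)%nat -> T <= t -> Rabs (x i t) <= b).
  { intros b Hb1 Hb2. apply (eventually_within N s alpha amax); auto; try lra; try lia.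
    - apply solves_of_is_solution; auto.
    - intros i Hi. pose proof (Hs_top i Hi). lra. }
  split.
  - destruct (Hwithin ((s (N - 1)%nat + s (N - 2)%nat) / 2)) as [T [HT Hb]]; try lra.
    exists T. split; auto. intros i Hi t Ht.
    specialize (Hb i t ltac:(lia) Ht). apply Rabs_le_between in Hb.
    pose proof (Hs_top i ltac:(lia)). lra.
  - intros i Hi eps Heps.
    pose proof (Rmin_l (s (N - 1)%nat + eps) ((s (N - 1)%nat + s (N - 2)%nat) / 2)).
    pose proof (Rmin_r (s (N - 1)%nat + eps) ((s (N - 1)%nat + s (N - 2)%nat) / 2)).
    set (b := Rmin (s (N - 1)%nat + eps) ((s (N - 1)%nat + s (N - 2)%nat) / 2)) in *.
    destruct (Hwithin b) as [T [_ Hb]]; [apply Rmin_glb_lt; lra|lra|].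
    exists T. intros t Ht. specialize (Hb i t ltac:(lia) Ht). lra.
Qed.
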